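(* (i) Consider the stochastic equation for the projective coordinate $w$ of a qubit \[ dw = i[(h_{00}+h_{01}w)w-(h_{10}+h_{11}w)]\, dt + (1-w^2)\, dY^1_t + i(1+w^2)\, dY^2_t - 2w\, dY^3_t . \] Writing this equation in terms of the innovation process $dB^j_t = dY^j_t - 2\langle \sigma_j \rangle_W \, dt$, $j=1,2,3$, it takes exactly the same form, with $B^j_t$ in place of $Y^j_t$ (all new terms with the differential $dt$ cancel). (ii) The diffusion operator $D$ corresponding to this equation with vanishing $H$ (i.e. $dw=(1-w^2)\,dY^1_t+i(1+w^2)\,dY^2_t-2w\,dY^3_t$) takes the form \[ D S(x,y) = \frac12 (1+x^2+y^2)^2\left(\frac{\partial^2 S}{\partial x^2}+\frac{\partial^2 S}{\partial y^2}\right) \] in the real coordinates $x,y$ with $w=x+iy$, so that $D=2\Delta_{sp}$, where $\Delta_{sp}$ is the Laplace–Beltrami operator on the 2-dimensional sphere written in stereographic coordinates.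
   Context: A qubit (Hilbert space $\mathbb{C}^2$) is continuously observed by homodyne detection with three coupling operators $L_j$, its a posteriori unnormalized state $\chi=(\chi_0,\chi_1)$ satisfying the linear Belavkin filtering equation $d\chi = -[iH\chi + \frac12 \sum_j L_j^*L_j\chi]\,dt + \sum_j L_j\chi\, dY^j_t$, where $H=(h_{jk})_{j,k=0,1}$ is the self-adjoint Hamiltonian and $Y_t=(Y^1_t,Y^2_t,Y^3_t)$ is the output process (a Brownian motion). The coupling operators are chosen to be the three Pauli matrices $\sigma_1=\begin{pmatrix}0&1\\1&0\end{pmatrix}$, $\sigma_2=\begin{pmatrix}0&-i\\ i&0\end{pmatrix}$, $\sigma_3=\begin{pmatrix}1&0\\0&-1\end{pmatrix}$. The projective coordinate is $w=\chi_1/\chi_0$, $W=(1,w)=\chi/\chi_0$, and for an operator $A$ and vector $v$, $\langle A\rangle_v=(v,Av)/(v,v)$. Rewriting the filtering equation in terms of $w$ via Itô's formula with $L_j=\sigma_j$ yields the stochastic equation for $w$ stated in the claim (the $dt$-terms coming from $L_j^*L_j$ and from the Itô correction vanish). The diffusion operator of an SDE is its generator computed via Itô's formula. *)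

From Stdlib Require Import Reals.
From Coquelicot Require Export Coquelicot.
Open Scope R_scope.

Record M2 := mkM2 { m00 : C; m01 : C; m10 : C; m11 : C }.
Definition V2 := (C * C)%type.

Definition Mapply (A : M2) (v : V2) : V2 :=
  ((m00 A * fst v + m01 A * snd v)%C, (m10 A * fst v + m11 A * snd v)%C).

Definition inner (u v : V2) : C :=
  (Cconj (fst u) * fst v + Cconj (snd u) * snd v)%C.

Definition expect (A : M2) (v : V2) : C := (inner v (Mapply A v) / inner v v)%C.

Definition self_adjoint (A : M2) : Prop :=
  Cconj (m00 A) = m00 A /\ Cconj (m11 A) = m11 A /\ m10 A = Cconj (m01 A).

Definition sigma1 : M2 := mkM2 0 1 1 0.
Definition sigma2 : M2 := mkM2 0 (- Ci)%C Ci 0.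
Definition sigma3 : M2 := mkM2 1 0 0 (-1)%C.

Definition Wvec (w : C) : V2 := (RtoC 1, w).

(** A complex SDE  dw = a(w) dt + b1(w) dZ^1 + b2(w) dZ^2 + b3(w) dZ^3
    driven by a 3-dimensional (real) Brownian motion Z. *)
Record SDE3 := mkSDE3 {
  drift : C -> C; diff1 : C -> C; diff2 : C -> C; diff3 : C -> C }.

Definition qubit_sde (H : M2) : SDE3 :=
  mkSDE3
    (fun w => Ci * ((m00 H + m01 H * w) * w - (m10 H + m11 H * w)))%C
    (fun w => 1 - w * w)%C
    (fun w => Ci * (1 + w * w))%C
    (fun w => - (2 * w))%C.

(** Rewriting an equation driven by Y in terms of the innovation process
    dB^j = dY^j - 2 <L_j>_W dt, i.e. substituting dY^j = dB^j + 2<L_j>_W dt: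
    diffusion coefficients unchanged, drift gains sum_j b_j(w) 2 <L_j>_W. *)
Definition innovation_form (s : SDE3) (L1 L2 L3 : M2) : SDE3 :=
  mkSDE3
    (fun w => drift s w
       + diff1 s w * (2 * expect L1 (Wvec w))
       + diff2 s w * (2 * expect L2 (Wvec w))
       + diff3 s w * (2 * expect L3 (Wvec w)))%C
    (diff1 s) (diff2 s) (diff3 s).

Definition dx (S : R -> R -> R) (x y : R) : R := Derive (fun t => S t y) x.
Definition dy (S : R -> R -> R) (x y : R) : R := Derive (fun t => S x t) y.
Definition dxx S x y := dx (dx S) x y.
Definition dyy S x y := dy (dy S) x y.
Definition dxy S x y := dx (dy S) x y.

(** Diffusion operator (generator via Ito's formula) of an SDE3 acting on a
    function S of the real coordinates (x, y), w = x + i y: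
    DS = Re a S_x + Im a S_y
         + 1/2 sum_j [ (Re b_j)^2 S_xx + 2 Re b_j Im b_j S_xy + (Im b_j)^2 S_yy ]. *)
Definition diff_term (b : C) (S : R -> R -> R) (x y : R) : R :=
  Re b * Re b * dxx S x y + 2 * (Re b * Im b) * dxy S x y + Im b * Im b * dyy S x y.

Definition generator (s : SDE3) (S : R -> R -> R) (x y : R) : R :=
  let w : C := (x, y) in
  Re (drift s w) * dx S x y + Im (drift s w) * dy S x y
  + / 2 * (diff_term (diff1 s w) S x y + diff_term (diff2 s w) S x y
           + diff_term (diff3 s w) S x y).

(** Laplace-Beltrami operator in 2 coordinates for a diagonal metric
    g = g11 dx^2 + g22 dy^2:
    Delta S = (1/sqrt|g|) [ d_x (sqrt|g| g^11 d_x S) + d_y (sqrt|g| g^22 d_y S) ]. *)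
Definition laplace_beltrami_diag (g11 g22 : R -> R -> R) (S : R -> R -> R)
  (x y : R) : R :=
  let sg := fun a b => sqrt (g11 a b * g22 a b) in
  / sg x y *
  (Derive (fun t => sg t y * / g11 t y * dx S t y) x
   + Derive (fun t => sg x t * / g22 x t * dy S x t) y).

(** Round metric of the unit 2-sphere in stereographic coordinates:
    g = 4/(1+x^2+y^2)^2 (dx^2 + dy^2). *)
Definition sphere_metric (x y : R) : R := 4 / (1 + x ^ 2 + y ^ 2) ^ 2.

Definition laplace_sphere (S : R -> R -> R) (x y : R) : R :=
  laplace_beltrami_diag sphere_metric sphere_metric S x y.

Definition zeroM2 : M2 := mkM2 0 0 0 0.

From Stdlib Require Import Reals Lra FunctionalExtensionality.
From Coquelicot Require Import Coquelicot.
Open Scope R_scope.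

(** For W = (1, x + i y) the expectations of the Pauli matrices form the Bloch
    vector (2x, 2y, 1 - x^2 - y^2) / (1 + x^2 + y^2), the inverse stereographic
    projection of w.  Substituting dY^j = dB^j + 2 <sigma_j>_W dt adds to the drift
    sum_j b_j(w) 2 <sigma_j>_W, which vanishes identically (for every H, self-adjoint
    or not).  For (ii), the vectors (Re b_j, Im b_j), j = 1, 2, 3, are the columns
    of a 2x3 matrix whose rows are orthogonal of common length 1 + x^2 + y^2, so the
    second-order part of the generator is (1 + x^2 + y^2)^2 / 2 times the flat
    Laplacian.  In dimension two sqrt|g| g^11 = sqrt|g| g^22 = 1 for a conformal
    metric g = lambda (dx^2 + dy^2), so its Laplace-Beltrami operator is the flat
    Laplacian divided by lambda; for the sphere lambda = 4 / (1 + x^2 + y^2)^2. *)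

Lemma innovation_form_id (s : SDE3) (L1 L2 L3 : M2) :
  (forall w, (diff1 s w * (2 * expect L1 (Wvec w))
              + diff2 s w * (2 * expect L2 (Wvec w))
              + diff3 s w * (2 * expect L3 (Wvec w)))%C = 0) ->
  innovation_form s L1 L2 L3 = s.
Proof.
  intros Hcorr; destruct s as [a b1 b2 b3]; unfold innovation_form; simpl in *.
  f_equal; apply functional_extensionality; intro w.
  specialize (Hcorr w); rewrite <- Cplus_assoc in Hcorr.
  rewrite <- 2!Cplus_assoc, Hcorr; apply Cplus_0_r.
Qed.

Lemma expect_sigma1_Wvec (x y : R) :
  expect sigma1 (Wvec (x, y)) = RtoC (2 * x / (1 + x ^ 2 + y ^ 2)).
Proof.
  unfold expect, inner, Mapply, Wvec, sigma1, Cdiv, Cinv, Cmult, Cplus, Cconj, RtoC.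
  apply injective_projections; simpl; field; nra.
Qed.

Lemma expect_sigma2_Wvec (x y : R) :
  expect sigma2 (Wvec (x, y)) = RtoC (2 * y / (1 + x ^ 2 + y ^ 2)).
Proof.
  unfold expect, inner, Mapply, Wvec, sigma2, Cdiv, Cinv, Cmult, Cplus, Copp, Cconj,
    Ci, RtoC.
  apply injective_projections; simpl; field; nra.
Qed.

Lemma expect_sigma3_Wvec (x y : R) :
  expect sigma3 (Wvec (x, y)) = RtoC ((1 - x ^ 2 - y ^ 2) / (1 + x ^ 2 + y ^ 2)).
Proof.
  unfold expect, inner, Mapply, Wvec, sigma3, Cdiv, Cinv, Cmult, Cplus, Copp, Cconj,
    RtoC.
  apply injective_projections; simpl; field; nra.
Qed.

Lemma qubit_innovation_correction_eq0 (w : C) :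
  ((1 - w * w) * (2 * expect sigma1 (Wvec w))
   + Ci * (1 + w * w) * (2 * expect sigma2 (Wvec w))
   + - (2 * w) * (2 * expect sigma3 (Wvec w)))%C = 0.
Proof.
  destruct w as [x y].
  rewrite expect_sigma1_Wvec, expect_sigma2_Wvec, expect_sigma3_Wvec.
  unfold Cmult, Cplus, Cminus, Copp, Ci, RtoC.
  apply injective_projections; simpl; field; nra.
Qed.

Lemma diff_term_sum_isotropic (b1 b2 b3 : C) (c : R) (S : R -> R -> R) (x y : R) :
  Re b1 * Re b1 + Re b2 * Re b2 + Re b3 * Re b3 = c ->
  Im b1 * Im b1 + Im b2 * Im b2 + Im b3 * Im b3 = c ->
  Re b1 * Im b1 + Re b2 * Im b2 + Re b3 * Im b3 = 0 ->
  diff_term b1 S x y + diff_term b2 S x y + diff_term b3 S x y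
  = c * (dxx S x y + dyy S x y).
Proof.
  intros Hre Him Hmix; unfold diff_term.
  transitivity ((Re b1 * Re b1 + Re b2 * Re b2 + Re b3 * Re b3) * dxx S x y
                + 2 * (Re b1 * Im b1 + Re b2 * Im b2 + Re b3 * Im b3) * dxy S x y
                + (Im b1 * Im b1 + Im b2 * Im b2 + Im b3 * Im b3) * dyy S x y).
  - ring.
  - rewrite Hre, Him, Hmix; ring.
Qed.

Lemma generator_qubit_sde_zeroM2 (S : R -> R -> R) (x y : R) :
  generator (qubit_sde zeroM2) S x y
  = / 2 * (1 + x ^ 2 + y ^ 2) ^ 2 * (dxx S x y + dyy S x y).
Proof.
  unfold generator.
  assert (Hdrift : drift (qubit_sde zeroM2) (x, y) = 0%C).
  { unfold qubit_sde, zeroM2, Cmult, Cplus, Cminus, Copp, Ci, RtoC; simpl.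
    apply injective_projections; simpl; ring. }
  rewrite Hdrift, diff_term_sum_isotropic with (c := (1 + x ^ 2 + y ^ 2) ^ 2).
  { simpl; ring. }
  all: unfold qubit_sde, Cmult, Cplus, Cminus, Copp, Ci, RtoC; simpl; ring.
Qed.

Lemma laplace_beltrami_conformal (g S : R -> R -> R) (x y : R) :
  (forall a b, 0 < g a b) ->
  laplace_beltrami_diag g g S x y = / g x y * (dxx S x y + dyy S x y).
Proof.
  intros Hg; unfold laplace_beltrami_diag.
  assert (Hunit : forall a b, sqrt (g a b * g a b) * / g a b = 1).
  { intros a b; rewrite sqrt_square by (apply Rlt_le, Hg).
    apply Rinv_r, Rgt_not_eq, Hg. }
  rewrite (Derive_ext _ (fun t => dx S t y)) by (intro; rewrite Hunit; ring).
  rewrite (Derive_ext (fun t => _ * _ * dy S x t) (fun t => dy S x t))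
    by (intro; rewrite Hunit; ring).
  rewrite sqrt_square by (apply Rlt_le, Hg).
  reflexivity.
Qed.

Lemma sphere_metric_gt0 (x y : R) : 0 < sphere_metric x y.
Proof.
  unfold sphere_metric; apply Rdiv_lt_0_compat; [lra | apply pow_lt; nra].
Qed.

Theorem proposition3p1 :
  (* (i) in terms of the innovation process the equation keeps the same form *)
  (forall H : M2, self_adjoint H ->
     innovation_form (qubit_sde H) sigma1 sigma2 sigma3 = qubit_sde H)
  /\
  (* (ii) diffusion operator for vanishing H *)
  (forall (S : R -> R -> R) (x y : R),
     generator (qubit_sde zeroM2) S x y
       = / 2 * (1 + x ^ 2 + y ^ 2) ^ 2 * (dxx S x y + dyy S x y)
     /\ generator (qubit_sde zeroM2) S x y = 2 * laplace_sphere S x y).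
Proof.
  split.
  - intros H _; apply innovation_form_id; intro w.
    exact (qubit_innovation_correction_eq0 w).
  - intros S x y; rewrite generator_qubit_sde_zeroM2; split; [reflexivity |].
    unfold laplace_sphere; rewrite laplace_beltrami_conformal by apply sphere_metric_gt0.
    unfold sphere_metric; field; nra.
Qed.
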